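(* In the setting of the context, define functors $\bar Q,\bar Q':\mathcal A\to\mathcal B$ by the equalizers $q:\bar Q\to PC$ of $(\theta^lP)\circ(Pi)$ and $(\theta^rP)\circ(Pi)$ (both $PC\to SPQP$), and $q':\bar Q'\to DP$ of $(P\omega^l)\circ(jP)$ and $(P\omega^r)\circ(jP)$ (both $DP\to PQPR$). Then (1) $\bar Q$ and $\bar Q'$ are naturally isomorphic; they can be chosen equal with $(jP)\circ q'=(Pi)\circ q$; and (2) $\bar Q$ carries the structure of a $\mathbb D$-$\mathbb C$ bicomodule functor, with right $\mathbb C$-coaction $\bar c$ determined by $(qC)\circ\bar c=(P\Delta^C)\circ q$ and left $\mathbb D$-coaction $\bar d$ determined by $(Dq')\circ\bar d=(\Delta^DP)\circ q'$.
   Context: Setting: $\mathcal A,\mathcal B$ categories with equalizers; equalizer-preserving functors $P:\mathcal A\to\mathcal B$, $Q:\mathcal B\to\mathcal A$, $R:\mathcal A\to\mathcal A$, $S:\mathcal B\to\mathcal B$; natural $r:\mathcal A\to R$, $s:\mathcal B\to S$, $w:QP\to R$, $z:PQ\to S$, $\tau:Q\to QPQ$ with (i) $r$ the equalizer of $rR,Rr$ and $s$ the equalizer of $sS,Ss$; (ii) $(QP\tau)\circ\tau=(\tau PQ)\circ\tau$; (iii) $(Qz)\circ\tau=Qs$, $(wQ)\circ\tau=rQ$. ($\circ$ vertical, juxtaposition horizontal composition; functor names denote identity transformations.) $\omega^l:=(QPw)\circ(\tau P)$, $\omega^r:=QPr$, $(C,i)$ their equalizer; $\theta^l:=(zPQ)\circ(P\tau)$,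 $\theta^r:=sPQ$, $(D,j)$ their equalizer. $\mathbb C=(C,\Delta^C,\varepsilon^C)$ is the comonad on $\mathcal A$ with $(QPi)\circ(iC)\circ\Delta^C=(\tau P)\circ i$, $r\circ\varepsilon^C=w\circ i$; $\mathbb D=(D,\Delta^D,\varepsilon^D)$ the comonad on $\mathcal B$ with $(PQj)\circ(jD)\circ\Delta^D=(P\tau)\circ j$, $s\circ\varepsilon^D=z\circ j$. A $\mathbb D$-$\mathbb C$ bicomodule functor $\bar Q:\mathcal A\to\mathcal B$ has a left $\mathbb D$-coaction $\bar Q\to D\bar Q$ and a right $\mathbb C$-coaction $\bar Q\to\bar QC$, each counital and coassociative, which commute. *)

Set Implicit Arguments.
Unset Strict Implicit.

Record Category := {
  Ob :> Type;
  Hom : Ob -> Ob -> Type;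
  comp : forall x y z : Ob, Hom y z -> Hom x y -> Hom x z;
  idm : forall a : Ob, Hom a a;
  comp_assoc : forall a b c d (f : Hom a b) (g : Hom b c) (h : Hom c d),
      comp h (comp g f) = comp (comp h g) f;
  comp_id_l : forall a b (f : Hom a b), comp (idm b) f = f;
  comp_id_r : forall a b (f : Hom a b), comp f (idm a) = f
}.
Arguments Hom {_} _ _.
Arguments comp {_ _ _ _} _ _.
Arguments idm {_} _.

Notation "g ∘ f" := (comp g f) (at level 40, left associativity).

Record Functor (C D : Category) := {
  fobj :> Ob C -> Ob D;
  fmap : forall a b : Ob C, Hom a b -> Hom (fobj a) (fobj b);
  fmap_id : forall a, fmap (idm a) = idm (fobj a);
  fmap_comp : forall a b c (f : Hom a b) (g : Hom b c),
      fmap (g ∘ f) = fmap g ∘ fmap f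
}.
Arguments fmap {_ _} _ {_ _} _.

Definition IdF (C : Category) : Functor C C.
Proof.
  refine {| fobj := fun a => a; fmap := fun a b f => f |}; reflexivity.
Defined.

Definition FComp {C D E : Category} (G : Functor D E) (F : Functor C D)
  : Functor C E.
Proof.
  refine {| fobj := fun a => G (F a); fmap := fun a b f => fmap G (fmap F f) |}.
  - intro a; rewrite !fmap_id; reflexivity.
  - intros a b c f g; rewrite !fmap_comp; reflexivity.
Defined.

Record NatTrans {C D : Category} (F G : Functor C D) := {
  ntc :> forall a : Ob C, Hom (F a) (G a);
  naturality : forall a b (f : Hom a b), ntc b ∘ fmap F f = fmap G f ∘ ntc a
}.

Definition IsEqualizer {C : Category} {E X Y : Ob C}
    (e : Hom E X) (f g : Hom X Y) : Prop :=
  f ∘ e = g ∘ e /\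
  forall (Z : Ob C) (h : Hom Z X), f ∘ h = g ∘ h -> exists! u : Hom Z E, e ∘ u = h.

Definition HasEqualizers (C : Category) : Prop :=
  forall (X Y : Ob C) (f g : Hom X Y), exists (E : Ob C) (e : Hom E X), IsEqualizer e f g.

Definition PreservesEqualizers {C D : Category} (F : Functor C D) : Prop :=
  forall (E X Y : Ob C) (e : Hom E X) (f g : Hom X Y),
    IsEqualizer e f g -> IsEqualizer (fmap F e) (fmap F f) (fmap F g).

Definition IsIso {C : Category} {X Y : Ob C} (f : Hom X Y) : Prop :=
  exists g : Hom Y X, g ∘ f = idm X /\ f ∘ g = idm Y.

Definition IsComonad {C : Category} (K : Functor C C)
    (Δ : NatTrans K (FComp K K)) (ε : NatTrans K (IdF C)) : Prop :=
  (forall X, ε (K X) ∘ Δ X = idm (K X)) /\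
  (forall X, fmap K (ε X) ∘ Δ X = idm (K X)) /\
  (forall X, Δ (K X) ∘ Δ X = fmap K (Δ X) ∘ Δ X).

Definition IsRightCoaction {A B : Category} (K : Functor A A)
    (Δ : NatTrans K (FComp K K)) (ε : NatTrans K (IdF A))
    (F : Functor A B) (ρ : NatTrans F (FComp F K)) : Prop :=
  (forall X, fmap F (ε X) ∘ ρ X = idm (F X)) /\
  (forall X, ρ (K X) ∘ ρ X = fmap F (Δ X) ∘ ρ X).

Definition IsLeftCoaction {A B : Category} (L : Functor B B)
    (Δ : NatTrans L (FComp L L)) (ε : NatTrans L (IdF B))
    (F : Functor A B) (λ : NatTrans F (FComp L F)) : Prop :=
  (forall X, ε (F X) ∘ λ X = idm (F X)) /\
  (forall X, fmap L (λ X) ∘ λ X = Δ (F X) ∘ λ X).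

Definition IsBicomodule {A B : Category}
    (L : Functor B B) (ΔL : NatTrans L (FComp L L)) (εL : NatTrans L (IdF B))
    (K : Functor A A) (ΔK : NatTrans K (FComp K K)) (εK : NatTrans K (IdF A))
    (F : Functor A B) (λ : NatTrans F (FComp L F)) (ρ : NatTrans F (FComp F K))
    : Prop :=
  IsLeftCoaction ΔL εL λ /\ IsRightCoaction ΔK εK ρ /\
  (forall X, λ (K X) ∘ ρ X = fmap L (ρ X) ∘ λ X).

From Stdlib Require Import ClassicalEpsilon.
Set Implicit Arguments.
Unset Strict Implicit.

(* Both [Qb] and [Qb'] are the intersection, inside [P Q P], of the subobject
   [P C] (embedded by [P i], again an equalizer because [P] preserves them) and
   the subobject [D P] (embedded by [j P]); equalizing two pairs in either order
   gives the same subobject, whence the isomorphism.  The right coaction is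
   [P ΔC] restricted along [q : Qb -> P C] and the left coaction is [ΔD P]
   restricted along [q' : Qb' -> D P]; they exist because [ω^l, ω^r, θ^l, θ^r]
   commute with [τ] by the coassociativity condition (ii), and they satisfy the
   comodule laws because [Qb] sits inside the cofree comodules [P C] and [D P].
   Seen inside [P Q P], both coactions are restrictions of [P τ P], so they
   commute, again by (ii). *)

Lemma eq_comp_r2 {C : Category} {a b c d : Ob C}
    (f : Hom b c) (g : Hom a b) (k : Hom a c) :
  f ∘ g = k -> forall h : Hom d a, f ∘ (g ∘ h) = k ∘ h.
Proof. intros E h. rewrite comp_assoc, E. reflexivity. Qed.

Lemma eq_comp_r3 {C : Category} {a b c d e : Ob C}
    (f : Hom c d) (g : Hom b c) (k : Hom a b) (m : Hom a d) :
  f ∘ (g ∘ k) = m -> forall h : Hom e a, f ∘ (g ∘ (k ∘ h)) = m ∘ h.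
Proof. intros E h. rewrite <- E, !comp_assoc. reflexivity. Qed.

Ltac comp_normalize :=
  cbn [fobj fmap FComp IdF];
  repeat rewrite fmap_comp; repeat rewrite fmap_id;
  repeat rewrite comp_id_l; repeat rewrite comp_id_r;
  repeat rewrite <- comp_assoc.

(* Rewrites with an equation between composites anywhere inside a composite,
   working in right-associated normal form. *)
Ltac rewrite_assoc_with E :=
  let H := fresh "H" in
  pose proof E as H; cbn [fobj fmap FComp IdF] in H;
  repeat rewrite fmap_comp in H; repeat rewrite <- comp_assoc in H;
  comp_normalize;
  first [ rewrite (eq_comp_r3 H) | rewrite (eq_comp_r2 H) | rewrite H ];
  clear H; comp_normalize.

Tactic Notation "rewrite_assoc" constr(E) := rewrite_assoc_with E.
Tactic Notation "rewrite_assoc" "<-" constr(E) := rewrite_assoc_with (eq_sym E).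

Section Equalizers.
Context {C : Category}.

Definition Monic {X Y : Ob C} (m : Hom X Y) : Prop :=
  forall Z (u v : Hom Z X), m ∘ u = m ∘ v -> u = v.

Lemma monic_comp {X Y Z : Ob C} (g : Hom Y Z) (f : Hom X Y) :
  Monic g -> Monic f -> Monic (g ∘ f).
Proof.
  intros hg hf W u v E. apply hf, hg. rewrite !comp_assoc. exact E.
Qed.

Lemma equalizer_monic {E X Y : Ob C} (e : Hom E X) (f g : Hom X Y) :
  IsEqualizer e f g -> Monic e.
Proof.
  intros [he univ] Z u v Huv.
  destruct (univ Z (e ∘ u)) as [k [_ Hk]].
  { rewrite !comp_assoc, he; reflexivity. }
  transitivity k; [symmetry|]; apply Hk; auto.
Qed.

Lemma equalizer_factor {E X Y Z : Ob C} (e : Hom E X) (f g : Hom X Y) (h : Hom Z X) :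
  IsEqualizer e f g -> f ∘ h = g ∘ h -> {u : Hom Z E | e ∘ u = h}.
Proof.
  intros [_ univ] Hh. apply constructive_indefinite_description.
  destruct (univ Z h Hh) as [u [Hu _]]. exists u; exact Hu.
Qed.

Lemma equalizer_comp_iso {E E' X Y : Ob C} (e : Hom E X) (f g : Hom X Y) (p : Hom E' E) :
  IsEqualizer e f g -> IsIso p -> IsEqualizer (e ∘ p) f g.
Proof.
  intros [he univ] [p' [Hp1 Hp2]]. split.
  - rewrite !comp_assoc, he; reflexivity.
  - intros Z h Hh. destruct (univ Z h Hh) as [u [Hu Hu']].
    exists (p' ∘ u). split.
    + rewrite <- comp_assoc, (comp_assoc u p' p), Hp2, comp_id_l; exact Hu.
    + intros v Hv. rewrite (Hu' (p ∘ v)).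
      * rewrite comp_assoc, Hp1, comp_id_l; reflexivity.
      * rewrite comp_assoc; exact Hv.
Qed.

(* Equalizing [(f1, g1)] and then [(f2, g2)] gives the same subobject as
   doing it in the other order. *)
Lemma equalizer_intersection_factor {X Y1 Y2 E1 E2 M M' : Ob C}
  {e1 : Hom E1 X} {f1 g1 : Hom X Y1} {e2 : Hom E2 X} {f2 g2 : Hom X Y2}
  {m : Hom M E1} {m' : Hom M' E2}
  (he1 : IsEqualizer e1 f1 g1) (he2 : IsEqualizer e2 f2 g2)
  (hm : IsEqualizer m (f2 ∘ e1) (g2 ∘ e1)) (hm' : IsEqualizer m' (f1 ∘ e2) (g1 ∘ e2)) :
  {φ : Hom M M' | e2 ∘ m' ∘ φ = e1 ∘ m}.
Proof.
  destruct (equalizer_factor he2 (h := e1 ∘ m)) as [v Hv].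
  { rewrite !comp_assoc. apply hm. }
  destruct (equalizer_factor hm' (h := v)) as [φ Hφ].
  { rewrite <- !comp_assoc, Hv, !comp_assoc, (proj1 he1). reflexivity. }
  exists φ. rewrite <- comp_assoc, Hφ. exact Hv.
Qed.

Lemma equalizer_intersection_iso {X Y1 Y2 E1 E2 M M' : Ob C}
  {e1 : Hom E1 X} {f1 g1 : Hom X Y1} {e2 : Hom E2 X} {f2 g2 : Hom X Y2}
  {m : Hom M E1} {m' : Hom M' E2}
  (he1 : IsEqualizer e1 f1 g1) (he2 : IsEqualizer e2 f2 g2)
  (hm : IsEqualizer m (f2 ∘ e1) (g2 ∘ e1)) (hm' : IsEqualizer m' (f1 ∘ e2) (g1 ∘ e2))
  (φ : Hom M M') : e2 ∘ m' ∘ φ = e1 ∘ m -> IsIso φ.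
Proof.
  intros Hφ.
  destruct (equalizer_intersection_factor he2 he1 hm' hm) as [ψ Hψ].
  assert (mono1 : Monic (e1 ∘ m))
    by (apply monic_comp; eapply equalizer_monic; eassumption).
  assert (mono2 : Monic (e2 ∘ m'))
    by (apply monic_comp; eapply equalizer_monic; eassumption).
  exists ψ; split.
  - apply mono1. rewrite comp_id_r, comp_assoc, Hψ. exact Hφ.
  - apply mono2. rewrite comp_id_r, comp_assoc, Hφ. exact Hψ.
Qed.

End Equalizers.

Definition Natural {C D : Category} (F G : Functor C D)
    (α : forall X, Hom (F X) (G X)) : Prop :=
  forall a b (f : Hom a b), α b ∘ fmap F f = fmap G f ∘ α a.
Arguments Natural {C D} F G α.

Section Naturality.
Context {C D E : Category}.

Lemma natural_comp {F G H : Functor C D}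
    (β : forall X, Hom (G X) (H X)) (α : forall X, Hom (F X) (G X)) :
  Natural G H β -> Natural F G α -> Natural F H (fun X => β X ∘ α X).
Proof.
  intros hβ hα a b f. rewrite <- comp_assoc, hα, comp_assoc, hβ, comp_assoc.
  reflexivity.
Qed.

Lemma natural_fmap (K : Functor D E) {F G : Functor C D} (α : forall X, Hom (F X) (G X)) :
  Natural F G α -> Natural (FComp K F) (FComp K G) (fun X => fmap K (α X)).
Proof. intros hα a b f. cbn. rewrite <- !fmap_comp, hα. reflexivity. Qed.

Lemma natural_whisker {F G : Functor D E} (α : forall X, Hom (F X) (G X)) (K : Functor C D) :
  Natural F G α -> Natural (FComp F K) (FComp G K) (fun X => α (K X)).
Proof. intros hα a b f. apply hα. Qed.

Definition nat_lift {F G H : Functor C D}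
    (m : forall X, Hom (F X) (G X)) (α : forall X, Hom (H X) (G X))
    (hm : Natural F G m) (hmono : forall X, Monic (m X)) (hα : Natural H G α)
    (lift : forall X, {u : Hom (H X) (F X) | m X ∘ u = α X}) : NatTrans H F.
Proof.
  refine {| ntc := fun X => proj1_sig (lift X) |}.
  intros a b f. apply hmono.
  rewrite !comp_assoc, (proj2_sig (lift b)), hα, hm, <- comp_assoc, (proj2_sig (lift a)).
  reflexivity.
Defined.

End Naturality.

Lemma preserves_equalizers_comp {A B C : Category} (G : Functor B C) (F : Functor A B) :
  PreservesEqualizers G -> PreservesEqualizers F -> PreservesEqualizers (FComp G F).
Proof. intros hG hF E X Y e f g H. apply hG, hF, H. Qed.

Lemma preserves_equalizers_equalizer {C D : Category} {K F G : Functor C D}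
    (j : NatTrans K F) (α β : forall Y, Hom (F Y) (G Y)) :
  Natural F G α -> Natural F G β -> (forall Y, IsEqualizer (j Y) (α Y) (β Y)) ->
  PreservesEqualizers F -> PreservesEqualizers G -> PreservesEqualizers K.
Proof.
  intros hα hβ hj hF hG E X Y e f g He. split.
  { rewrite <- !fmap_comp. f_equal. apply He. }
  intros Z h Hh.
  assert (HFe : fmap F f ∘ (j X ∘ h) = fmap F g ∘ (j X ∘ h)).
  { rewrite !comp_assoc, <- !naturality, <- !comp_assoc, Hh. reflexivity. }
  destruct (equalizer_factor (hF _ _ _ _ _ _ He) HFe) as [v Hv].
  assert (Hαβ : α E ∘ v = β E ∘ v).
  { apply (equalizer_monic (hG _ _ _ _ _ _ He)).
    rewrite !comp_assoc, <- hα, <- hβ, <- !comp_assoc, Hv, !comp_assoc.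
    f_equal. apply hj. }
  destruct (equalizer_factor (hj E) Hαβ) as [u Hu].
  exists u. split.
  - apply (equalizer_monic (hj X)).
    rewrite comp_assoc, naturality, <- comp_assoc, Hu. exact Hv.
  - intros u' Hu'. apply (equalizer_monic (hj E)). rewrite Hu.
    apply (equalizer_monic (hF _ _ _ _ _ _ He)).
    rewrite Hv, comp_assoc, <- naturality, <- comp_assoc, Hu'. reflexivity.
Qed.

Lemma cofree_right_subcomodule {A B : Category} {K : Functor A A}
    {Δ : NatTrans K (FComp K K)} {ε : NatTrans K (IdF A)} (hK : IsComonad Δ ε)
    {F H : Functor A B} (u : forall X, Hom (F X) (H (K X))) (ρ : NatTrans F (FComp F K)) :
  Natural F (FComp H K) u -> (forall X, Monic (u X)) ->
  (forall X, u (K X) ∘ ρ X = fmap H (Δ X) ∘ u X) -> IsRightCoaction Δ ε ρ.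
Proof.
  destruct hK as [_ [counit coassoc]]. intros hu mono hρ. split; intro X.
  - apply mono. rewrite comp_id_r.
    rewrite_assoc (hu _ _ (ε X)). rewrite_assoc (hρ X).
    rewrite_assoc (f_equal (fmap H) (counit X)). reflexivity.
  - apply mono.
    rewrite_assoc (hρ (K X)). rewrite_assoc (hρ X).
    rewrite_assoc (hu _ _ (Δ X)). rewrite_assoc (hρ X).
    rewrite_assoc (f_equal (fmap H) (coassoc X)). reflexivity.
Qed.

Lemma cofree_left_subcomodule {A B : Category} {L : Functor B B}
    {Δ : NatTrans L (FComp L L)} {ε : NatTrans L (IdF B)} (hL : IsComonad Δ ε)
    {F H : Functor A B} (u : forall X, Hom (F X) (L (H X))) (λ : NatTrans F (FComp L F)) :
  (forall X, Monic (u X)) -> (forall X, Monic (fmap L (fmap L (u X)))) ->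
  (forall X, fmap L (u X) ∘ λ X = Δ (H X) ∘ u X) -> IsLeftCoaction Δ ε λ.
Proof.
  destruct hL as [counit [_ coassoc]]. intros mono mono2 hλ. split; intro X.
  - apply mono. rewrite comp_id_r.
    rewrite_assoc <- (naturality ε (u X)). rewrite_assoc (hλ X).
    rewrite_assoc (counit (H X)). reflexivity.
  - apply mono2.
    rewrite_assoc (f_equal (fmap L) (hλ X)). rewrite_assoc (hλ X).
    rewrite_assoc <- (naturality Δ (u X)). rewrite_assoc (hλ X).
    rewrite_assoc (coassoc (H X)). reflexivity.
Qed.

Section Qbar.
Context {A B : Category} {P : Functor A B} {Q : Functor B A} {R : Functor A A}
  {S : Functor B B} {r : NatTrans (IdF A) R} {s : NatTrans (IdF B) S}
  {w : NatTrans (FComp Q P) R} {z : NatTrans (FComp P Q) S}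
  {τ : NatTrans Q (FComp Q (FComp P Q))}.

Definition omega_l X := fmap Q (fmap P (w X)) ∘ τ (P X).
Definition omega_r X := fmap Q (fmap P (r X)).
Definition theta_l Y := z (P (Q Y)) ∘ fmap P (τ Y).
Definition theta_r Y := s (P (Q Y)).

Hypotheses (hP : PreservesEqualizers P) (hQ : PreservesEqualizers Q)
  (hS : PreservesEqualizers S).
Hypothesis hτ : forall Y, fmap Q (fmap P (τ Y)) ∘ τ Y = τ (P (Q Y)) ∘ τ Y.

Lemma omega_l_tau X :
  fmap Q (fmap P (omega_l X)) ∘ τ (P X) = τ (P (R X)) ∘ omega_l X.
Proof.
  unfold omega_l. comp_normalize.
  rewrite_assoc hτ. rewrite_assoc <- (naturality τ (fmap P (w X))). reflexivity.
Qed.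

Lemma omega_r_tau X :
  fmap Q (fmap P (omega_r X)) ∘ τ (P X) = τ (P (R X)) ∘ omega_r X.
Proof. symmetry. apply (naturality τ). Qed.

Lemma theta_l_tau Y :
  theta_l (P (Q Y)) ∘ fmap P (τ Y) = fmap S (fmap P (τ Y)) ∘ theta_l Y.
Proof.
  unfold theta_l. comp_normalize.
  rewrite_assoc <- (f_equal (fmap P) (hτ Y)).
  rewrite_assoc (naturality z (fmap P (τ Y))). reflexivity.
Qed.

Lemma theta_r_tau Y :
  theta_r (P (Q Y)) ∘ fmap P (τ Y) = fmap S (fmap P (τ Y)) ∘ theta_r Y.
Proof. apply (naturality s). Qed.

Lemma theta_l_natural : Natural (FComp P Q) (FComp S (FComp P Q)) theta_l.
Proof.
  intros a b f. unfold theta_l. comp_normalize.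
  rewrite_assoc (f_equal (fmap P) (naturality τ f)).
  rewrite_assoc (naturality z (fmap P (fmap Q f))). reflexivity.
Qed.

Lemma theta_r_natural : Natural (FComp P Q) (FComp S (FComp P Q)) theta_r.
Proof. intros a b f. apply (naturality s). Qed.

Context {C : Functor A A} {i : NatTrans C (FComp Q P)}
  {ΔC : NatTrans C (FComp C C)} {εC : NatTrans C (IdF A)}
  {D : Functor B B} {j : NatTrans D (FComp P Q)}
  {ΔD : NatTrans D (FComp D D)} {εD : NatTrans D (IdF B)}
  {Qb : Functor A B} {q : NatTrans Qb (FComp P C)}
  {Qb' : Functor A B} {q' : NatTrans Qb' (FComp D P)}.

Hypothesis hi : forall X, IsEqualizer (i X) (omega_l X) (omega_r X).
Hypothesis hCcom : IsComonad ΔC εC.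
Hypothesis hΔC : forall X, fmap Q (fmap P (i X)) ∘ i (C X) ∘ ΔC X = τ (P X) ∘ i X.
Hypothesis hj : forall Y, IsEqualizer (j Y) (theta_l Y) (theta_r Y).
Hypothesis hDcom : IsComonad ΔD εD.
Hypothesis hΔD : forall Y, fmap P (fmap Q (j Y)) ∘ j (D Y) ∘ ΔD Y = fmap P (τ Y) ∘ j Y.
Hypothesis hq : forall X,
  IsEqualizer (q X) (theta_l (P X) ∘ fmap P (i X)) (theta_r (P X) ∘ fmap P (i X)).
Hypothesis hq' : forall X,
  IsEqualizer (q' X) (fmap P (omega_l X) ∘ j (P X)) (fmap P (omega_r X) ∘ j (P X)).

Lemma D_preserves_equalizers : PreservesEqualizers D.
Proof.
  apply (preserves_equalizers_equalizer theta_l_natural theta_r_natural hj).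
  - exact (preserves_equalizers_comp hP hQ).
  - exact (preserves_equalizers_comp hS (preserves_equalizers_comp hP hQ)).
Qed.

(* [Qb] as a subobject of [P Q P], where both of its defining conditions live. *)
Definition Qbar_incl X := fmap P (i X) ∘ q X.

Lemma Qbar_incl_natural : Natural Qb (FComp P (FComp Q P)) Qbar_incl.
Proof. exact (natural_comp (natural_fmap P (naturality i)) (naturality q)). Qed.

Definition Qbar_iso : NatTrans Qb Qb' :=
  nat_lift
    (natural_comp (natural_whisker P (naturality j)) (naturality q'))
    (fun X => monic_comp (equalizer_monic (hj (P X))) (equalizer_monic (hq' X)))
    Qbar_incl_natural
    (fun X => equalizer_intersection_factor (hP (hi X)) (hj (P X)) (hq X) (hq' X)).

Lemma Qbar_iso_spec X : j (P X) ∘ q' X ∘ Qbar_iso X = Qbar_incl X.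
Proof.
  exact (proj2_sig (equalizer_intersection_factor (hP (hi X)) (hj (P X)) (hq X) (hq' X))).
Qed.

Lemma Qbar_iso_is_iso X : IsIso (Qbar_iso X).
Proof.
  exact (equalizer_intersection_iso (hP (hi X)) (hj (P X)) (hq X) (hq' X) (Qbar_iso_spec X)).
Qed.

Definition Qbar_proj X := q' X ∘ Qbar_iso X.

Lemma Qbar_proj_equalizer X :
  IsEqualizer (Qbar_proj X) (fmap P (omega_l X) ∘ j (P X)) (fmap P (omega_r X) ∘ j (P X)).
Proof. exact (equalizer_comp_iso (hq' X) (Qbar_iso_is_iso X)). Qed.

Lemma Qbar_proj_natural : Natural Qb (FComp D P) Qbar_proj.
Proof. exact (natural_comp (naturality q') (naturality Qbar_iso)). Qed.

Lemma Qbar_incl_proj X : j (P X) ∘ Qbar_proj X = Qbar_incl X.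
Proof. unfold Qbar_proj. rewrite comp_assoc. apply Qbar_iso_spec. Qed.

Lemma j_comult Y : j (P (Q Y)) ∘ fmap D (j Y) ∘ ΔD Y = fmap P (τ Y) ∘ j Y.
Proof. rewrite (naturality j). rewrite_assoc (hΔD Y). reflexivity. Qed.

Lemma coact_r_equalizes X :
  theta_l (P (C X)) ∘ fmap P (i (C X)) ∘ (fmap P (ΔC X) ∘ q X) =
  theta_r (P (C X)) ∘ fmap P (i (C X)) ∘ (fmap P (ΔC X) ∘ q X).
Proof.
  assert (reduce : forall θ, Natural (FComp P Q) (FComp S (FComp P Q)) θ ->
    θ (P (Q (P X))) ∘ fmap P (τ (P X)) = fmap S (fmap P (τ (P X))) ∘ θ (P X) ->
    fmap S (fmap P (fmap Q (fmap P (i X)))) ∘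
      (θ (P (C X)) ∘ fmap P (i (C X)) ∘ (fmap P (ΔC X) ∘ q X)) =
    fmap S (fmap P (τ (P X))) ∘ (θ (P X) ∘ fmap P (i X) ∘ q X)).
  { intros θ hθ hθτ.
    rewrite_assoc <- (hθ _ _ (fmap P (i X))).
    rewrite_assoc (f_equal (fmap P) (hΔC X)).
    rewrite_assoc hθτ. reflexivity. }
  (* [cbn] unfolds the [FComp] objects hidden in the composites, so that
     [reduce] matches syntactically. *)
  apply (equalizer_monic (hS (hP (hQ (hP (hi X)))))); cbn [fobj FComp IdF] in reduce |- *.
  rewrite (reduce _ theta_l_natural (theta_l_tau (P X))),
    (reduce _ theta_r_natural (theta_r_tau (P X))).
  f_equal. apply (hq X).
Qed.

Definition Qbar_coact_r : NatTrans Qb (FComp Qb C) :=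
  nat_lift (natural_whisker C (naturality q)) (fun X => equalizer_monic (hq (C X)))
    (natural_comp (natural_fmap P (naturality ΔC)) (naturality q))
    (fun X => equalizer_factor (hq (C X)) (coact_r_equalizes X)).

Lemma Qbar_coact_r_spec X : q (C X) ∘ Qbar_coact_r X = fmap P (ΔC X) ∘ q X.
Proof. exact (proj2_sig (equalizer_factor (hq (C X)) (coact_r_equalizes X))). Qed.

Lemma coact_l_equalizes X :
  fmap D (fmap P (omega_l X) ∘ j (P X)) ∘ (ΔD (P X) ∘ Qbar_proj X) =
  fmap D (fmap P (omega_r X) ∘ j (P X)) ∘ (ΔD (P X) ∘ Qbar_proj X).
Proof.
  assert (reduce : forall ω : Hom (Q (P X)) (Q (P (R X))),
    fmap Q (fmap P ω) ∘ τ (P X) = τ (P (R X)) ∘ ω ->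
    j (P (Q (P (R X)))) ∘ (fmap D (fmap P ω ∘ j (P X)) ∘ (ΔD (P X) ∘ Qbar_proj X)) =
    fmap P (τ (P (R X))) ∘ (fmap P ω ∘ j (P X) ∘ Qbar_proj X)).
  { intros ω hωτ.
    rewrite_assoc (naturality j (fmap P ω)).
    rewrite_assoc (j_comult (P X)).
    rewrite_assoc (f_equal (fmap P) hωτ). reflexivity. }
  apply (equalizer_monic (hj (P (Q (P (R X)))))); cbn [fobj FComp IdF] in reduce |- *.
  rewrite (reduce _ (omega_l_tau X)), (reduce _ (omega_r_tau X)).
  f_equal. apply (Qbar_proj_equalizer X).
Qed.

Definition Qbar_coact_l : NatTrans Qb (FComp D Qb) :=
  nat_lift (natural_fmap D Qbar_proj_natural)
    (fun X => equalizer_monic (D_preserves_equalizers (Qbar_proj_equalizer X)))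
    (natural_comp (natural_whisker P (naturality ΔD)) Qbar_proj_natural)
    (fun X => equalizer_factor (D_preserves_equalizers (Qbar_proj_equalizer X))
                (coact_l_equalizes X)).

Lemma Qbar_coact_l_spec X :
  fmap D (Qbar_proj X) ∘ Qbar_coact_l X = ΔD (P X) ∘ Qbar_proj X.
Proof.
  exact (proj2_sig (equalizer_factor (D_preserves_equalizers (Qbar_proj_equalizer X))
                      (coact_l_equalizes X))).
Qed.

Lemma Qbar_coact_r_coaction : IsRightCoaction ΔC εC Qbar_coact_r.
Proof.
  exact (cofree_right_subcomodule hCcom (naturality q) (fun X => equalizer_monic (hq X))
           Qbar_coact_r_spec).
Qed.

Lemma Qbar_coact_l_coaction : IsLeftCoaction ΔD εD Qbar_coact_l.
Proof.
  exact (cofree_left_subcomodule hDcom (fun X => equalizer_monic (Qbar_proj_equalizer X))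
           (fun X => equalizer_monic
              (D_preserves_equalizers (D_preserves_equalizers (Qbar_proj_equalizer X))))
           Qbar_coact_l_spec).
Qed.

Lemma Qbar_incl_coact_r X :
  fmap P (fmap Q (fmap P (i X))) ∘ Qbar_incl (C X) ∘ Qbar_coact_r X =
  fmap P (τ (P X)) ∘ Qbar_incl X.
Proof.
  unfold Qbar_incl. rewrite_assoc (Qbar_coact_r_spec X).
  rewrite_assoc (f_equal (fmap P) (hΔC X)). reflexivity.
Qed.

Lemma Qbar_incl_coact_l X :
  j (P (Q (P X))) ∘ fmap D (Qbar_incl X) ∘ Qbar_coact_l X = fmap P (τ (P X)) ∘ Qbar_incl X.
Proof.
  rewrite <- !Qbar_incl_proj. rewrite_assoc (Qbar_coact_l_spec X).
  rewrite_assoc (j_comult (P X)). reflexivity.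
Qed.

Lemma D_Qbar_incl_monic X : Monic (fmap D (Qbar_incl X)).
Proof.
  unfold Qbar_incl. rewrite fmap_comp.
  apply monic_comp; eapply equalizer_monic; apply D_preserves_equalizers;
    [exact (hP (hi X)) | exact (hq X)].
Qed.

Lemma Qbar_coact_compat X :
  Qbar_coact_l (C X) ∘ Qbar_coact_r X = fmap D (Qbar_coact_r X) ∘ Qbar_coact_l X.
Proof.
  apply (monic_comp (equalizer_monic (hP (hQ (hP (hQ (hP (hi X)))))))
           (monic_comp (equalizer_monic (hj _)) (D_Qbar_incl_monic (X := C X)))).
  rewrite_assoc (Qbar_incl_coact_l (C X)).
  rewrite_assoc <- (f_equal (fmap P) (naturality τ (fmap P (i X)))).
  rewrite_assoc (Qbar_incl_coact_r X).
  rewrite_assoc <- (f_equal (fmap P) (hτ (P X))).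
  rewrite_assoc <- (naturality j (fmap P (fmap Q (fmap P (i X))))).
  rewrite_assoc (f_equal (fmap D) (Qbar_incl_coact_r X)).
  rewrite_assoc (naturality j (fmap P (τ (P X)))).
  rewrite_assoc (Qbar_incl_coact_l X). reflexivity.
Qed.

Lemma Qbar_bicomodule : IsBicomodule ΔD εD ΔC εC Qbar_coact_l Qbar_coact_r.
Proof.
  exact (conj Qbar_coact_l_coaction (conj Qbar_coact_r_coaction Qbar_coact_compat)).
Qed.

End Qbar.

Theorem mainTheorem14
  (A B : Category) (hA : HasEqualizers A) (hB : HasEqualizers B)
  (P : Functor A B) (Q : Functor B A) (R : Functor A A) (S : Functor B B)
  (hP : PreservesEqualizers P) (hQ : PreservesEqualizers Q)
  (hR : PreservesEqualizers R) (hS : PreservesEqualizers S)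
  (r : NatTrans (IdF A) R) (s : NatTrans (IdF B) S)
  (w : NatTrans (FComp Q P) R) (z : NatTrans (FComp P Q) S)
  (τ : NatTrans Q (FComp Q (FComp P Q)))
  (* (i) *)
  (hr : forall X : Ob A, IsEqualizer (r X) (r (R X)) (fmap R (r X)))
  (hs : forall Y : Ob B, IsEqualizer (s Y) (s (S Y)) (fmap S (s Y)))
  (* (ii) *)
  (hτ : forall Y : Ob B,
      fmap Q (fmap P (τ Y)) ∘ τ Y = τ (P (Q Y)) ∘ τ Y)
  (* (iii) *)
  (hz : forall Y : Ob B, fmap Q (z Y) ∘ τ Y = fmap Q (s Y))
  (hw : forall Y : Ob B, w (Q Y) ∘ τ Y = r (Q Y))
  (* the comonad C *)
  (C : Functor A A) (i : NatTrans C (FComp Q P))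
  (hi : forall X : Ob A,
      IsEqualizer (i X) (fmap Q (fmap P (w X)) ∘ τ (P X)) (fmap Q (fmap P (r X))))
  (ΔC : NatTrans C (FComp C C)) (εC : NatTrans C (IdF A))
  (hCcom : IsComonad ΔC εC)
  (hΔC : forall X : Ob A,
      fmap Q (fmap P (i X)) ∘ i (C X) ∘ ΔC X = τ (P X) ∘ i X)
  (hεC : forall X : Ob A, r X ∘ εC X = w X ∘ i X)
  (* the comonad D *)
  (D : Functor B B) (j : NatTrans D (FComp P Q))
  (hj : forall Y : Ob B,
      IsEqualizer (j Y) (z (P (Q Y)) ∘ fmap P (τ Y)) (s (P (Q Y))))
  (ΔD : NatTrans D (FComp D D)) (εD : NatTrans D (IdF B))
  (hDcom : IsComonad ΔD εD)
  (hΔD : forall Y : Ob B,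
      fmap P (fmap Q (j Y)) ∘ j (D Y) ∘ ΔD Y = fmap P (τ Y) ∘ j Y)
  (hεD : forall Y : Ob B, s Y ∘ εD Y = z Y ∘ j Y)
  (* the functors Qbar and Qbar' *)
  (Qb : Functor A B) (q : NatTrans Qb (FComp P C))
  (hq : forall X : Ob A,
      IsEqualizer (q X)
        (z (P (Q (P X))) ∘ fmap P (τ (P X)) ∘ fmap P (i X))
        (s (P (Q (P X))) ∘ fmap P (i X)))
  (Qb' : Functor A B) (q' : NatTrans Qb' (FComp D P))
  (hq' : forall X : Ob A,
      IsEqualizer (q' X)
        (fmap P (fmap Q (fmap P (w X)) ∘ τ (P X)) ∘ j (P X))
        (fmap P (fmap Q (fmap P (r X))) ∘ j (P X))) :
  exists φ : NatTrans Qb Qb',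
    (forall X : Ob A, IsIso (φ X)) /\
    (forall X : Ob A, j (P X) ∘ q' X ∘ φ X = fmap P (i X) ∘ q X) /\
    exists (cb : NatTrans Qb (FComp Qb C)) (db : NatTrans Qb (FComp D Qb)),
      (forall X : Ob A, q (C X) ∘ cb X = fmap P (ΔC X) ∘ q X) /\
      (forall X : Ob A,
         fmap D (q' X ∘ φ X) ∘ db X = ΔD (P X) ∘ (q' X ∘ φ X)) /\
      IsBicomodule ΔD εD ΔC εC db cb.
Proof.
  exists (Qbar_iso hP hi hj hq hq').
  split; [exact (Qbar_iso_is_iso hP hi hj hq hq') |].
  split; [exact (Qbar_iso_spec hP hi hj hq hq') |].
  exists (Qbar_coact_r hP hQ hS hτ hi hΔC hq),
         (Qbar_coact_l hP hQ hS hτ hi hj hΔD hq hq').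
  split; [exact (Qbar_coact_r_spec hP hQ hS hτ hi hΔC hq) |].
  split; [exact (Qbar_coact_l_spec hP hQ hS hτ hi hj hΔD hq hq') |].
  exact (Qbar_bicomodule hP hQ hS hτ hi hCcom hΔC hj hDcom hΔD hq hq').
Qed.
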